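(* Let $G=(G'_\ell,A'_\ell,B'_\ell)\circ\cdots\circ(G'_1,A'_1,B'_1)\circ G'_0$ be the compact canonical decomposition of a graph $G$. For $S\subseteq V(G)$ let $S_i=S\cap V(G'_i)$. Then $S$ is a fixing set of $G$ if and only if $S_i$ is a fixing set of $G'_i$ for every $i=0,1,\dots,\ell$. Consequently $\mathrm{Fix}(G)=\sum_{i=0}^{\ell}\mathrm{Fix}(G'_i)$.
   Context: All graphs are finite and simple. A set $S\subseteq V(G)$ is a fixing set of $G$ if the only automorphism of $G$ fixing every vertex of $S$ is the identity; $\mathrm{Fix}(G)$ is the minimum size of a fixing set. A graph is split if its vertex set can be partitioned into $A$ (inducing a complete graph) and $B$ (inducing an independent set), either possibly empty; $(A,B)$ is a $KS$-partition. For split $(G,A,B)$ with $V(G)\neq\emptyset$ and a graph $H$, $V(H)\ne\emptyset$, on disjoint vertices, $(G,A,B)\circ H$ is the graph on $V(G)\cup V(H)$ with edge set $E(G)\cup E(H)\cup\{uv:u\in A,v\in V(H)\}$ (associative; iterated compositions read right-nested). A graph is indecomposable if it is not isomorphic to any such composition. Canonical decomposition (Tyshkevich): every graph is $G=(G_k,A_k,B_k)\circ\cdots\circ(G_1,A_1,B_1)\circ G_0$ with every $G_i$ indecomposable, unique up to componentwise isomorphism. A single-vertex component $(G_i,A_i,B_i)$, $i\ge1$, has type $K_1$ if $A_i=V(G_i)$ and type $S_1$ if $B_i=V(G_i)$; if $G_0$ and $G_1$ are both single-vertex graphs, $G_0$ gets the type of $G_1$. The compact canonical decomposition is obtained by replacing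 each maximal run of consecutive single-vertex components of the same type by a single component: $m$ components of type $K_1$ by $K_m$ with $KS$-partition $(V(K_m),\emptyset)$, and $m$ components of type $S_1$ by the edgeless graph on $m$ vertices with $KS$-partition $(\emptyset,\text{all vertices})$ (a run containing $G_0$ yields the new $G'_0$). *)

(* Graphs are symmetric irreflexive relations on a finType. *)
From mathcomp Require Import all_boot fingroup perm.
Set Implicit Arguments. Unset Strict Implicit. Unset Printing Implicit Defensive.


Definition is_aut {T : finType} (e : rel T) (f : {perm T}) : bool :=
  [forall x, forall y, e (f x) (f y) == e x y].

Definition fixing_set {T : finType} (e : rel T) (S : {set T}) : bool :=
  [forall f : {perm T},
     (is_aut e f && [forall x in S, f x == x]) ==> (f == 1%g)].

(* Fix(G): minimum size of a fixing set (V(G) itself is always fixing). *)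
Definition Fix {T : finType} (e : rel T) : nat :=
  \big[minn/#|T|]_(S : {set T} | fixing_set e S) #|S|.

Definition induced {T : finType} (e : rel T) (V : {set T}) : rel {x : T | x \in V} :=
  fun x y => e (val x) (val y).

Definition trace {T : finType} (V S : {set T}) : {set {x : T | x \in V}} :=
  [set x | val x \in S].
Arguments induced {T} e V _ _.
Arguments trace {T} V S.

(* G is decomposable: it is (isomorphic to) a composition (G1,A,B) o H with
   V(G1) = X, V(H) = Y both nonempty, A clique, B = X \ A independent,
   A complete to Y, B anticomplete to Y (written out on V(G) itself). *)
Definition decomposable {T : finType} (e : rel T) : Prop :=
  exists X Y A : {set T},
    [/\ [disjoint X & Y], X :|: Y = setT, X != set0, Y != set0 &
    [/\ A \subset X,
        (forall a b, a \in A -> b \in A -> a != b -> e a b),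
        (forall a b, a \in X :\: A -> b \in X :\: A -> ~~ e a b),
        (forall a y, a \in A -> y \in Y -> e a y) &
        (forall b y, b \in X :\: A -> y \in Y -> ~~ e b y)]].

Definition indecomposable {T : finType} (e : rel T) : Prop := ~ decomposable e.

(* A decomposition of G = (T,e) is described by a labelling lab : T -> nat
   (component index of each vertex, 0..k) and the set A collecting the clique
   parts A_i of the split components (i >= 1); B_i = V(G_i) \ A. *)
Definition comp {T : finType} (lab : T -> nat) (i : nat) : {set T} := [set x | lab x == i].

Definition canonical_decomposition {T : finType} (e : rel T) (k : nat) (lab : T -> nat)
  (A : {set T}) : Prop :=
  [/\ (forall x, lab x <= k),
      (forall i, i <= k -> exists x, lab x = i) &
   [/\
      (* (G_i, A_i, B_i) is split with KS-partition (A_i, B_i), i >= 1 *)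
      (forall x y, lab x = lab y -> 1 <= lab x -> x \in A -> y \in A ->
                   x != y -> e x y),
      (forall x y, lab x = lab y -> 1 <= lab x -> x \notin A -> y \notin A ->
                   ~~ e x y),
      (* right-nested composition: a vertex of G_i (i > j) is adjacent to all
         of V(G_j) if it lies in A_i and to none of it otherwise *)
      (forall x y, lab y < lab x -> e x y = (x \in A)) &
      (forall i, i <= k -> indecomposable (induced e (comp lab i)))]].

Definition single {T : finType} (lab : T -> nat) (i : nat) : bool := #|comp lab i| == 1.
(* type of a single-vertex component: true = K_1, false = S_1 *)
Definition ctype {T : finType} (lab : T -> nat) (A : {set T}) (i : nat) : bool :=
  [exists x in comp lab i, x \in A].
(* component j >= 1 is merged with component j-1: both single-vertex and of
   the same type (G_0 takes the type of G_1 when both are single vertices) *)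
Definition merges {T : finType} (lab : T -> nat) (A : {set T}) (j : nat) : bool :=
  [&& 1 <= j, single lab j, single lab j.-1 &
      (j == 1) || (ctype lab A j == ctype lab A j.-1)].
(* index in the compact decomposition of the old component i *)
Definition cidx {T : finType} (lab : T -> nat) (A : {set T}) (i : nat) : nat :=
  i - \sum_(1 <= j < i.+1) (merges lab A j : nat).
Definition ccomp {T : finType} (lab : T -> nat) (A : {set T}) (i : nat) : {set T} :=
  [set x | cidx lab A (lab x) == i].

From Pilot Require Import Defs.
From mathcomp Require Import all_boot order fingroup perm.
From mathcomp Require Import zify.
Set Implicit Arguments. Unset Strict Implicit. Unset Printing Implicit Defensive.
Import Order.TTheory.

(* Every automorphism of G maps each compact component onto itself.  If
   components j-1 and j are not merged, the vertices of the first j components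
   form the right factor of a decomposition G = (G[X], C, X \ C) o G[Y].  The
   preimage of a decomposition under an automorphism is again one, and no
   decomposition has a vertex of X below such a break and a vertex of Y above
   it: every component in between would be a single vertex, and the two single
   vertices at the break have different types.  So the preimage of the lower part is
   nested with it, and equal to it by counting.
   Conversely, an automorphism of one compact component, extended by the
   identity, is an automorphism of G, since it preserves the clique part A
   through which the component is joined to the others: a merged run consists
   of single vertices of one type, and an indecomposable split graph has a
   unique KS-partition with a clique of a given size.  Hence Aut(G) is the
   product of the Aut(G'_i), and fixing sets and Fix split componentwise. *)

Section FixingSets.
Variables (T : finType) (e : rel T).

Lemma autE (f : {perm T}) x y : is_aut e f -> e (f x) (f y) = e x y.
Proof. by move=> /forallP/(_ x)/forallP/(_ y)/eqP. Qed.

Lemma fixing_setT : fixing_set e setT.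
Proof.
apply/forallP => f; apply/implyP => /andP[_ /forallP fixT]; apply/eqP/permP => x.
by rewrite perm1; apply/eqP; have := fixT x; rewrite inE.
Qed.

Lemma fixing_setS (S S' : {set T}) :
  S \subset S' -> fixing_set e S -> fixing_set e S'.
Proof.
move=> sSS' /forallP fixS; apply/forallP => f; apply/implyP => /andP[autf /forallP fS'].
apply: (implyP (fixS f)); rewrite autf; apply/forallP => x; apply/implyP => Sx.
exact: (implyP (fS' x) (subsetP sSS' x Sx)).
Qed.

Lemma Fix_le_card (S : {set T}) : fixing_set e S -> Fix e <= #|S|.
Proof. exact: (bigmin_le_cond (T := nat) #|T| (fun S : {set T} => #|S|)). Qed.

Definition Fix_set : {set T} := [arg min_(S < setT | fixing_set e S) #|S|]%O.

Lemma Fix_set_fixing : fixing_set e Fix_set.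
Proof. by rewrite /Fix_set; case: arg_minP => //; apply: fixing_setT. Qed.

Lemma card_Fix_set : #|Fix_set| = Fix e.
Proof.
rewrite /Fix -minEnat (bigmin_eq_arg (T := nat) _ _ _ _ fixing_setT) // => S _.
exact: max_card.
Qed.

End FixingSets.

Lemma card_trace (T : finType) (V S : {set T}) : #|trace V S| = #|S :&: V|.
Proof.
rewrite -(card_imset _ val_inj); apply: eq_card => x.
apply/imsetP/idP => [[z + ->]|]; first by rewrite !inE (valP z) andbT.
by rewrite inE => /andP[Sx Vx]; exists (Sub x Vx); rewrite ?inE SubK.
Qed.

Lemma leq_card_bigcup (T : finType) n (F : 'I_n -> {set T}) :
  #|\bigcup_(i < n) F i| <= \sum_(i < n) #|F i|.
Proof.
apply: (big_ind2 (fun (X : {set T}) m => #|X| <= m)) => //; first by rewrite cards0.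
by move=> X1 n1 X2 n2 le1 le2; apply: leq_trans (leq_card_setU X1 X2).1 (leq_add le1 le2).
Qed.

Lemma exists_restr_perm (T : finType) (V : {set T}) (f : {perm T}) :
  {in V, forall x, f x \in V} ->
  exists g : {perm {x : T | x \in V}}, forall z, val (g z) = f (val z).
Proof.
move=> fV; pose g (z : {x : T | x \in V}) : {x : T | x \in V} :=
  Sub (f (val z)) (fV _ (valP z)).
have g_inj : injective g by move=> z z' /(congr1 val); rewrite !SubK => /perm_inj/val_inj.
by exists (perm g_inj) => z; rewrite permE SubK.
Qed.

Lemma exists_ext_perm (T : finType) (V : {set T}) (g : {perm {x : T | x \in V}}) :
  exists f : {perm T},
    (forall z, f (val z) = val (g z)) /\ {in [predC V], forall x, f x = x}.
Proof.
pose f x := if insub x is Some z then val (g z) else x.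
have f_inj : injective f.
  move=> x y; rewrite /f.
  case: insubP => [zx _ <-|Vx]; case: insubP => [zy _ <-|Vy] //.
  - by move/val_inj/perm_inj->.
  - by move=> eq_g; move: Vy; rewrite -eq_g (valP (g zx)).
  - by move=> eq_g; move: Vx; rewrite eq_g (valP (g zy)).
exists (perm f_inj); split => [z|x Vx]; rewrite permE /f ?valK //.
by rewrite insubN.
Qed.

Lemma card_sum_fibers (T : finType) (S : {set T}) n (c : T -> nat) :
  (forall x, c x < n) -> #|S| = \sum_(i < n) #|S :&: [set x | c x == i]|.
Proof.
move=> c_lt.
have card_fiber i : #|S :&: [set x | c x == i]| = \sum_(x in S) (c x == i : nat).
  rewrite -sum1_card [LHS]big_mkcond [RHS]big_mkcond /=.
  by apply: eq_bigr => x _; rewrite !inE; case: (x \in S); case: (c x == i).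
under eq_bigr => i _ do rewrite card_fiber.
rewrite exchange_big /= -sum1_card; apply: eq_bigr => x _.
rewrite (bigD1 (Ordinal (c_lt x))) //= eqxx big1 // => i.
by rewrite -val_eqE /= eq_sym => /negbTE->.
Qed.

Lemma Fix_sum_fibers (T : finType) (e : rel T) n (c : T -> nat) :
  (forall x, c x < n) ->
  (forall S, fixing_set e S <-> forall i, i < n ->
     fixing_set (induced e [set x | c x == i]) (trace [set x | c x == i] S)) ->
  Fix e = \sum_(i < n) Fix (induced e [set x | c x == i]).
Proof.
move=> c_lt fixP; apply/eqP; rewrite eqn_leq; apply/andP; split.
- pose S := \bigcup_(i < n) val @: Fix_set (induced e [set x | c x == i]).
  have fixS : fixing_set e S.
    apply/fixP => i lt_in; apply: fixing_setS (Fix_set_fixing _).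
    apply/subsetP => z Fz; rewrite inE; apply/bigcupP; exists (Ordinal lt_in) => //.
    exact: imset_f.
  apply: leq_trans (Fix_le_card fixS) (leq_trans (leq_card_bigcup _) _).
  by apply: leq_sum => i _; rewrite -card_Fix_set; apply: leq_imset_card.
- rewrite -card_Fix_set (card_sum_fibers _ c_lt); apply: leq_sum => i _.
  by rewrite -card_trace; apply/Fix_le_card/(fixP _).1; [apply: Fix_set_fixing|].
Qed.

Section Cuts.
Variables (T : finType) (e : rel T).

(* [cut_in V X Y C]: G[V] is the composition (G[X], C, X :\: C) o G[Y], so that
   [decomposable e] unfolds to [exists X Y C, cut_in e setT X Y C]. *)
Definition cut_in (V X Y C : {set T}) : Prop :=
  [/\ [disjoint X & Y], X :|: Y = V, X != set0, Y != set0 &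
    [/\ C \subset X,
        (forall a b, a \in C -> b \in C -> a != b -> e a b),
        (forall a b, a \in X :\: C -> b \in X :\: C -> ~~ e a b),
        (forall a y, a \in C -> y \in Y -> e a y) &
        (forall b y, b \in X :\: C -> y \in Y -> ~~ e b y)]].

Lemma cut_in_induced (V X Y C : {set T}) : cut_in V X Y C -> decomposable (induced e V).
Proof.
case=> dXY UXY /set0Pn[x0 Xx0] /set0Pn[y0 Yy0] [sCX Cclq XCind CY XCY].
have Vx0 : x0 \in V by rewrite -UXY inE Xx0.
have Vy0 : y0 \in V by rewrite -UXY inE Yy0 orbT.
exists [set z | val z \in X], [set z | val z \in Y], [set z | val z \in C]; split.
- rewrite -setI_eq0; apply/eqP/setP => z; rewrite !inE.
  by case Xz: (val z \in X); rewrite // (disjointFr dXY Xz).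
- by apply/setP => z; rewrite !inE -in_setU UXY (valP z).
- by apply/set0Pn; exists (Sub x0 Vx0); rewrite inE SubK.
- by apply/set0Pn; exists (Sub y0 Vy0); rewrite inE SubK.
split => [|a b|a b|a y|b y]; rewrite ?inE.
- by apply/subsetP => z; rewrite !inE; apply: (subsetP sCX).
- by move=> Ca Cb ab; apply: Cclq.
- by move=> /andP[Ca Xa] /andP[Cb Xb]; apply: XCind; rewrite inE ?Ca ?Xa ?Cb ?Xb.
- exact: CY.
- by move=> /andP[Cb Xb]; apply: XCY; rewrite inE Cb Xb.
Qed.

Lemma cut_in_restrict (V W X Y C : {set T}) :
  cut_in V X Y C -> W \subset V -> X :&: W != set0 -> Y :&: W != set0 ->
  cut_in W (X :&: W) (Y :&: W) (C :&: W).
Proof.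
case=> dXY UXY _ _ [sCX Cclq XCind CY XCY] sWV XW0 YW0; split => //.
- exact: disjointW (subsetIl X W) (subsetIl Y W) dXY.
- by rewrite -setIUl UXY; apply/setIidPr.
have XC_W x : x \in X :&: W :\: C :&: W -> x \in X :\: C.
  by rewrite !inE; case: (x \in W); rewrite ?andbT ?andbF.
split => [|a b|a b|a y|b y].
- exact: setSI.
- by rewrite !inE => /andP[Ca _] /andP[Cb _]; apply: Cclq.
- by move=> /XC_W XCa /XC_W XCb; apply: XCind.
- by rewrite !inE => /andP[Ca _] /andP[Yy _]; apply: CY.
- by move=> /XC_W XCb; rewrite inE => /andP[Yy _]; apply: XCY.
Qed.

Lemma cut_in_setD1 (V C : {set T}) z z' :
  z \in V -> z' \in V -> z' != z -> C \subset V :\ z ->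
  {in C &, forall a b, a != b -> e a b} -> {in V :\ z :\: C &, forall a b, ~~ e a b} ->
  {in C, forall a, e a z} -> {in V :\ z :\: C, forall b, ~~ e b z} ->
  cut_in V (V :\ z) [set z] C.
Proof.
move=> Vz Vz' z'z sCV Cclq XCind CY XCY; split.
- by rewrite disjoint_sym disjoints1 !inE eqxx.
- by rewrite setUC setD1K.
- by apply/set0Pn; exists z'; rewrite !inE z'z.
- by apply/set0Pn; exists z; rewrite inE.
by split => // [a y Ca|b y XCb]; rewrite inE => /eqP->; [apply: CY | apply: XCY].
Qed.

Lemma decomposable_const (c : bool) (V : {set T}) x0 x1 :
  irreflexive e -> x0 \in V -> x1 \in V -> x0 != x1 ->
  {in V &, forall a b, a != b -> e a b = c} -> decomposable (induced e V).
Proof.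
move=> e_irr Vx0 Vx1 x01 e_c.
have ne_x1 (a : T) : a \in V :\ x1 -> a != x1 by rewrite !inE => /andP[].
have V_x1 (a : T) : a \in V :\ x1 -> a \in V by rewrite !inE => /andP[].
apply: (@cut_in_induced _ (V :\ x1) [set x1] (if c then V :\ x1 else set0)).
apply: (cut_in_setD1 Vx1 Vx0 x01); case: c e_c => e_c.
all: rewrite ?sub0set ?subxx ?setDv ?setD0 //; try by move=> ?; rewrite inE.
- by move=> a b /V_x1 Va /V_x1 Vb ab; rewrite e_c.
- move=> a b /V_x1 Va /V_x1 Vb.
  by case: (eqVneq a b) => [->|ab]; rewrite ?e_irr ?e_c.
- by move=> a /[dup] /V_x1 Va /ne_x1 ax1; rewrite e_c.
- by move=> a /[dup] /V_x1 Va /ne_x1 ax1; rewrite e_c.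
Qed.

Section GraphCut.
Variables (X Y C : {set T}).
Hypothesis cutXY : cut_in setT X Y C.

Lemma cut_memX x : (x \in X) = (x \notin Y).
Proof.
case: cutXY => dXY UXY _ _ _; case Xx: (x \in X); first by rewrite (disjointFr dXY Xx).
by have := in_setT x; rewrite -UXY inE Xx /= => ->.
Qed.

Lemma cut_edge x y : x \in X -> y \in Y -> e x y = (x \in C).
Proof.
case: cutXY => _ _ _ _ [_ _ _ CY XCY] Xx Yy; case Cx: (x \in C); first exact: CY.
by apply/negbTE/XCY; rewrite // inE Cx.
Qed.

Lemma cut_edgeX x y :
  x \in X -> y \in X -> x != y -> (x \in C) = (y \in C) -> e x y = (x \in C).
Proof.
case: cutXY => _ _ _ _ [_ Cclq XCind _ _] Xx Xy xy Cxy; case Cx: (x \in C).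
  by apply: Cclq; rewrite -?Cxy.
by apply/negbTE/XCind; rewrite inE ?Xx ?Xy -?Cxy Cx.
Qed.

Lemma cut_preimset (f : {perm T}) :
  is_aut e f -> cut_in setT (f @^-1: X) (f @^-1: Y) (f @^-1: C).
Proof.
move=> /autE autf; case: cutXY => dXY UXY /set0Pn[x Xx] /set0Pn[y Yy].
case=> sCX Cclq XCind CY XCY; split.
- by rewrite -setI_eq0 -preimsetI (disjoint_setI0 dXY) preimset0.
- by rewrite -preimsetU UXY preimsetT.
- by apply/set0Pn; exists ((f^-1)%g x); rewrite inE permKV.
- by apply/set0Pn; exists ((f^-1)%g y); rewrite inE permKV.
split => [|a b|a b|a z|b z]; rewrite ?inE.
- exact: preimsetS.
- by move=> Ca Cb ab; rewrite -autf; apply: Cclq; rewrite // (inj_eq perm_inj).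
- move=> /andP[Ca Xa] /andP[Cb Xb]; rewrite -autf.
  by apply: XCind; rewrite inE ?Ca ?Xa ?Cb ?Xb.
- by move=> Ca Yz; rewrite -autf; apply: CY.
- by move=> /andP[Cb Xb] Yz; rewrite -autf; apply: XCY; rewrite ?inE ?Cb ?Xb.
Qed.

End GraphCut.

Definition ks_clique (V P : {set T}) : Prop :=
  [/\ P \subset V, {in P &, forall a b, a != b -> e a b} &
      {in V :\: P &, forall a b, ~~ e a b}].

Lemma ks_clique_diff_uniq (V P Q : {set T}) a b :
  ks_clique V P -> ks_clique V Q -> a \in P :\: Q -> b \in P :\: Q -> a = b.
Proof.
case=> sPV Pclq _ [_ _ Qind]; rewrite !inE => /andP[Qa Pa] /andP[Qb Pb].
case: (eqVneq a b) => // ab; move: (Qind a b).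
by rewrite !inE Qa Qb !(subsetP sPV) // Pclq // => /(_ isT isT).
Qed.

(* P and Q differ by one vertex each, a in P and b in Q; according to whether
   ab is an edge, b or a splits off as a one-vertex right factor. *)
Lemma ks_clique_uniq (V P Q : {set T}) :
  symmetric e -> indecomposable (induced e V) ->
  ks_clique V P -> ks_clique V Q -> #|P| = #|Q| -> P = Q.
Proof.
move=> e_sym indecV ksP ksQ cPQ; apply/eqP/contraT => neqPQ; case: indecV.
have [a Pa Qa] : exists2 a, a \in P & a \notin Q.
  by apply/subsetPn; apply: contra neqPQ => sPQ; rewrite eqEcard sPQ cPQ leqnn.
have [b Qb Pb] : exists2 b, b \in Q & b \notin P.
  by apply/subsetPn; apply: contra neqPQ => sQP; rewrite eq_sym eqEcard sQP cPQ leqnn.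
have P_a (z : T) : z \in P -> z != a -> z \in Q.
  move=> Pz za; apply/negPn/negP => Qz; case/eqP: za.
  by apply: (ks_clique_diff_uniq ksP ksQ); rewrite inE ?Pz ?Qz ?Pa ?Qa.
have Q_b (z : T) : z \in Q -> z != b -> z \in P.
  move=> Qz zb; apply/negPn/negP => Pz; case/eqP: zb.
  by apply: (ks_clique_diff_uniq ksQ ksP); rewrite inE ?Pz ?Qz ?Pb ?Qb.
case: ksP ksQ => sPV Pclq Pind [sQV Qclq Qind].
have Va := subsetP sPV a Pa; have Vb := subsetP sQV b Qb.
have ab : a != b by apply: contraNneq Pb => <-.
have VP (z : T) : z \in V -> z \notin P -> z \in V :\: P by rewrite inE => -> ->.
case ab_e: (e a b).
- apply: (@cut_in_induced V (V :\ b) [set b] P).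
  apply: (cut_in_setD1 Vb Va ab) => [|||p Pp|q].
  + by apply/subsetP => z Pz; rewrite !inE (subsetP sPV) // andbT; apply: contraNneq Pb => <-.
  + exact: Pclq.
  + move=> z z'; rewrite !inE => /andP[Pz /andP[_ Vz]] /andP[Pz' /andP[_ Vz']].
    by apply: Pind; apply: VP.
  + case: (eqVneq p a) => [->//|pa].
    by apply: Qclq => //; [exact: P_a | apply: contraNneq Pb => <-].
  + by rewrite !inE => /andP[Pq /andP[_ Vq]]; apply: Pind; apply: VP.
- apply: (@cut_in_induced V (V :\ a) [set a] (P :\ a)).
  have VaP (z : T) : z \in V :\ a :\: (P :\ a) -> z \in V :\: P /\ z != a.
    by rewrite !inE; case: eqP.
  apply: (cut_in_setD1 Va Vb); first by rewrite eq_sym.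
  + exact: setSD.
  + by move=> z z'; rewrite !inE => /andP[_ Pz] /andP[_ Pz']; apply: Pclq.
  + by move=> z z' /VaP[VPz _] /VaP[VPz' _]; apply: Pind.
  + by move=> p; rewrite !inE => /andP[pa Pp]; apply: Pclq.
  move=> q /VaP[VPq qa]; case: (eqVneq q b) => [->|qb]; first by rewrite e_sym ab_e.
  case/setDP: VPq => Vq Pq; apply: Qind; rewrite inE ?Qa ?Va ?Vq ?andbT //.
  by apply: contra Pq => Qq; apply: Q_b.
Qed.

Lemma aut_ks_clique (V P : {set T}) (h : {perm T}) :
  {in V, forall x, h x \in V} -> {in V &, forall a b, e (h a) (h b) = e a b} ->
  ks_clique V P -> ks_clique V (h @: P).
Proof.
move=> hV hE [sPV Pclq Pind].
have hVV : h @: V = V.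
  apply/eqP; rewrite eqEcard card_imset ?leqnn ?andbT; last exact: perm_inj.
  by apply/subsetP => _ /imsetP[x Vx ->]; apply: hV.
split.
- by rewrite -hVV; apply: imsetS.
- move=> _ _ /imsetP[p Pp ->] /imsetP[q Pq ->] hpq.
  by rewrite hE ?(subsetP sPV) //; apply: Pclq => //; apply: contraNneq hpq => ->.
- rewrite -{1}hVV => z z' /setDP[/imsetP[p Vp ->] hPp] /setDP[/imsetP[q Vq ->] hPq].
  rewrite (mem_imset _ _ perm_inj) in hPp; rewrite (mem_imset _ _ perm_inj) in hPq.
  by rewrite hE //; apply: Pind; apply/setDP.
Qed.

Lemma ks_clique_aut_stable (V P : {set T}) (h : {perm T}) :
  symmetric e -> indecomposable (induced e V) -> ks_clique V P ->
  {in V, forall x, h x \in V} -> {in V &, forall a b, e (h a) (h b) = e a b} ->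
  forall x, (h x \in P) = (x \in P).
Proof.
move=> e_sym indecV ksP hV hE x.
have hPP : h @: P = P.
  apply: (ks_clique_uniq e_sym indecV (aut_ks_clique hV hE ksP) ksP).
  by rewrite card_imset //; apply: perm_inj.
by rewrite -{1}hPP (mem_imset _ _ perm_inj).
Qed.

End Cuts.

Section CompactIndex.
Variables (T : finType) (lab : T -> nat) (A : {set T}).

Lemma cidxS i : cidx lab A i.+1 = cidx lab A i + ~~ merges lab A i.+1.
Proof.
have le_i : \sum_(1 <= j < i.+1) (merges lab A j : nat) <= i.
  apply: (@leq_trans (\sum_(1 <= j < i.+1) 1)); first by apply: leq_sum => j _; apply: leq_b1.
  by rewrite sum_nat_const_nat muln1 subn1.
by rewrite /cidx big_nat_recr //=; case: (merges lab A i.+1) => /=; lia.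
Qed.

Lemma leq_cidx a b : a <= b -> cidx lab A a <= cidx lab A b.
Proof.
move=> /subnKC <-; elim: (b - a) => [|n IHn]; first by rewrite addn0.
by rewrite addnS cidxS; apply: leq_trans IHn (leq_addr _ _).
Qed.

Lemma cidx_eq_merges a b j :
  cidx lab A a = cidx lab A b -> a < j <= b -> merges lab A j.
Proof.
case: j => [|j] eq_ab /andP[lt_aj le_jb] //; apply/negPn/negP => nmj.
have := @leq_cidx a j lt_aj; have := leq_cidx le_jb; rewrite cidxS nmj /=; lia.
Qed.

Lemma cidx_neq_break a b : a <= b -> cidx lab A a != cidx lab A b ->
  exists2 j, a < j <= b & ~~ merges lab A j.
Proof.
elim: b => [|b IHb]; first by rewrite leqn0 => /eqP-> /eqP.
rewrite leq_eqVlt => /orP[/eqP->|lt_ab]; first by rewrite eqxx.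
case mb: (merges lab A b.+1) => neq.
- rewrite cidxS mb addn0 in neq; have [j /andP[aj jb] nmj] := IHb lt_ab neq.
  by exists j; rewrite // aj (leq_trans jb).
- by exists b.+1; rewrite ?mb // lt_ab leqnn.
Qed.

Lemma cidx_ltn_eq a b c : cidx lab A a = cidx lab A b ->
  cidx lab A c != cidx lab A a -> (c < a) = (c < b).
Proof.
move=> eq_ab /eqP neq_c; case: (ltnP c a) => ca; case: (ltnP c b) => cb //.
- by have := leq_cidx (ltnW ca); have := leq_cidx cb; lia.
- by have := leq_cidx ca; have := leq_cidx (ltnW cb); lia.
Qed.

Lemma single_ctype m x : single lab m -> lab x = m -> ctype lab A m = (x \in A).
Proof.
move=> /cards1P[z cz] lx; have : x \in Defs.comp lab m by rewrite inE lx.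
rewrite cz => /set1P->; apply/existsP/idP => [[y /andP[]]|Az].
  by rewrite cz => /set1P->.
by exists z; rewrite cz set11.
Qed.

Lemma merged_run_single a b :
  cidx lab A a = cidx lab A b -> a < b -> single lab a && single lab b.
Proof.
move=> eq_ab lt_ab.
have /and4P[_ _ sa _] : merges lab A a.+1.
  by apply: (cidx_eq_merges eq_ab); rewrite ltnSn lt_ab.
have /and4P[_ sb _ _] : merges lab A b by apply: (cidx_eq_merges eq_ab); rewrite lt_ab leqnn.
by rewrite sb andbT.
Qed.

Lemma merged_run_ctype a b :
  cidx lab A a = cidx lab A b -> 0 < a -> a <= b -> ctype lab A a = ctype lab A b.
Proof.
move=> eq_ab a_gt0; elim: b eq_ab => [|b IHb] eq_ab; first by rewrite leqn0 => /eqP->.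
rewrite leq_eqVlt => /orP[/eqP->//|lt_ab].
have eq_ab' : cidx lab A a = cidx lab A b.
  by have := @leq_cidx a b lt_ab; have := leq_cidx (leqnSn b); lia.
have /and4P[_ _ _] : merges lab A b.+1 by apply: (cidx_eq_merges eq_ab); rewrite lt_ab leqnn.
rewrite -(IHb eq_ab' lt_ab) /=; case: b {IHb eq_ab eq_ab'} lt_ab => [|b] /=; first lia.
by move=> _ /eqP->.
Qed.

Lemma ccomp_nonsingle x : ~~ single lab (lab x) ->
  ccomp lab A (cidx lab A (lab x)) = Defs.comp lab (lab x).
Proof.
move=> nsx; apply/setP => z; rewrite !inE; apply/eqP/eqP => [eq_zx|->//].
case: (ltngtP (lab z) (lab x)) => // [lt_zx|lt_xz].
- by have /andP[_] := merged_run_single eq_zx lt_zx; rewrite (negbTE nsx).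
- by have /andP[] := merged_run_single (esym eq_zx) lt_xz; rewrite (negbTE nsx).
Qed.

End CompactIndex.

Section CanonicalDecomposition.
Variables (T : finType) (e : rel T) (k : nat) (lab : T -> nat) (A : {set T}).
Hypotheses (e_sym : symmetric e) (e_irr : irreflexive e)
  (cd : canonical_decomposition e k lab A).

Let lab_le x : lab x <= k. Proof. by case: cd. Qed.
Let lab_surj i : i <= k -> exists x, lab x = i. Proof. by case: cd => _ /(_ i). Qed.
Let cross_edge x y : lab y < lab x -> e x y = (x \in A).
Proof. by case: cd => _ _ [_ _ /(_ x y)]. Qed.
Let comp_indecomposable i : i <= k -> indecomposable (induced e (Defs.comp lab i)).
Proof. by case: cd => _ _ [_ _ _ /(_ i)]. Qed.

Lemma comp_edge x y : lab x = lab y -> 0 < lab x -> x != y ->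
  (x \in A) = (y \in A) -> e x y = (x \in A).
Proof.
case: cd => _ _ [clq ind _ _] lxy lx_gt0 xy Axy; case Ax: (x \in A).
  by apply: clq; rewrite -?Axy.
by apply/negbTE/ind; rewrite -?Axy ?Ax.
Qed.

Lemma comp_ks_clique i : 0 < i ->
  ks_clique e (Defs.comp lab i) (Defs.comp lab i :&: A).
Proof.
move=> i_gt0; split=> [|x y|x y]; first exact: subsetIl.
  rewrite !inE => /andP[/eqP lx Ax] /andP[/eqP ly Ay] xy; subst i.
  by rewrite comp_edge ?Ax ?Ay.
move=> /setDP[Vx Px] /setDP[Vy Py]; rewrite inE Vx /= in Px; rewrite inE Vy /= in Py.
move: Vx Vy; rewrite !inE => /eqP lx /eqP ly; subst i.
case: (eqVneq x y) => [->|xy]; first by rewrite e_irr.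
have Axy : (x \in A) = (y \in A) by rewrite (negbTE Px) (negbTE Py).
by rewrite (comp_edge (esym ly)).
Qed.

Lemma lower_cut j : 0 < j <= k ->
  cut_in e setT [set x | j <= lab x] [set x | lab x < j] (A :&: [set x | j <= lab x]).
Proof.
case/andP=> j_gt0 jk; split.
- by rewrite -setI_eq0; apply/eqP/setP => x; rewrite !inE; case: ltnP.
- by apply/setP => x; rewrite !inE; case: ltnP.
- by have [x lx] := lab_surj jk; apply/set0Pn; exists x; rewrite inE lx.
- by have [x lx] := lab_surj (leq0n k); apply/set0Pn; exists x; rewrite inE lx.
have upper_edge x y : j <= lab x -> j <= lab y -> x != y ->
    (x \in A) = (y \in A) -> e x y = (x \in A).
  move=> jx jy xy Axy; case: (ltngtP (lab x) (lab y)) => [lxy|lyx|lxy].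
  - by rewrite Axy e_sym cross_edge.
  - exact: cross_edge.
  - by apply: comp_edge; rewrite // (leq_trans j_gt0).
have upper_out x : x \in [set x | j <= lab x] :\: (A :&: [set x | j <= lab x]) ->
    (x \notin A) && (j <= lab x).
  by rewrite !inE => /andP[+ jx]; rewrite jx !andbT.
split => [|a b|a b|a y|b y].
- exact: subsetIr.
- by rewrite !inE => /andP[Aa ja] /andP[Ab jb] ab; rewrite upper_edge ?Aa ?Ab.
- move=> /upper_out/andP[Aa ja] /upper_out/andP[Ab jb].
  case: (eqVneq a b) => [->|ab]; first by rewrite e_irr.
  by rewrite upper_edge ?(negbTE Aa) ?(negbTE Ab).
- by rewrite !inE => /andP[Aa ja] yj; rewrite cross_edge ?(leq_trans yj).
- by move=> /upper_out/andP[Ab jb]; rewrite inE => yj; rewrite cross_edge ?(leq_trans yj).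
Qed.

Section Cut.
Variables (X Y C : {set T}).
Hypothesis cutXY : cut_in e setT X Y C.

Lemma cut_lab_neq x y : x \in X -> y \in Y -> lab x != lab y.
Proof.
move=> Xx Yy; apply/eqP => lxy; apply: (comp_indecomposable (lab_le x)).
apply: (cut_in_induced (cut_in_restrict cutXY (subsetT _) _ _)); apply/set0Pn.
- by exists x; rewrite !inE Xx eqxx.
- by exists y; rewrite !inE Yy lxy eqxx.
Qed.

Lemma cut_memC_above x y : x \in X -> y \in Y -> lab x < lab y -> (x \in C) = (y \in A).
Proof. by move=> Xx Yy lxy; rewrite -(cut_edge cutXY Xx Yy) e_sym cross_edge. Qed.

Lemma cut_memC_below x y : x \in X -> y \in Y -> lab y < lab x -> (x \in C) = (x \in A).
Proof. by move=> Xx Yy lyx; rewrite -(cut_edge cutXY Xx Yy) cross_edge. Qed.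

(* A component with two vertices on one side of the cut sees the other side
   uniformly, so it is complete or edgeless, hence decomposable. *)
Lemma cut_single_between xb ya m :
  xb \in X -> ya \in Y -> lab xb <= m <= lab ya -> single lab m.
Proof.
move=> Xxb Yya /andP[lxb_m lm_ya]; have mk := leq_trans lm_ya (lab_le ya).
apply/negPn/negP => nsm; apply: (comp_indecomposable mk).
have [x0 [x1 [mx0 mx1 x01]]] : exists x0 x1, [/\ x0 \in Defs.comp lab m,
    x1 \in Defs.comp lab m & x0 != x1].
  have [x lx] := lab_surj mk; apply/card_gt1P.
  by rewrite ltn_neqAle eq_sym nsm card_gt0; apply/set0Pn; exists x; rewrite inE lx.
have lab_m z : z \in Defs.comp lab m -> lab z = m by rewrite inE => /eqP.
case: (boolP [exists z in Defs.comp lab m, z \in Y]) => [/exists_inP[z mz Yz]|noY].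
- have Y_m a : a \in Defs.comp lab m -> a \in Y.
    move=> ma; apply/negPn/negP; rewrite -(cut_memX cutXY) => Xa.
    by have := cut_lab_neq Xa Yz; rewrite !lab_m ?eqxx.
  have lt_xb_m : lab xb < m.
    by rewrite ltn_neqAle lxb_m andbT -(lab_m z mz) cut_lab_neq.
  apply: (decomposable_const (c := xb \in C) e_irr mx0 mx1 x01) => a b ma mb ab.
  have Ca z' : z' \in Defs.comp lab m -> (xb \in C) = (z' \in A).
    by move=> mz'; apply: cut_memC_above => //; [apply: Y_m | rewrite (lab_m z' mz')].
  rewrite comp_edge -?Ca ?(lab_m a ma) ?(lab_m b mb) //.
  exact: leq_ltn_trans (leq0n _) lt_xb_m.
- have X_m a : a \in Defs.comp lab m -> a \in X.
    move=> ma; rewrite (cut_memX cutXY); apply: contra noY => Ya.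
    by apply/exists_inP; exists a.
  have lt_m_ya : m < lab ya.
    by rewrite ltn_neqAle lm_ya andbT -(lab_m x0 mx0) cut_lab_neq ?X_m.
  apply: (decomposable_const (c := ya \in A) e_irr mx0 mx1 x01) => a b ma mb ab.
  have Cz z' : z' \in Defs.comp lab m -> (z' \in C) = (ya \in A).
    by move=> mz'; apply: cut_memC_above => //; [apply: X_m | rewrite (lab_m z' mz')].
  by rewrite (cut_edgeX cutXY) ?X_m ?Cz.
Qed.

Lemma cut_memC_A u ya :
  u \in X -> ya \in Y -> 0 < lab u < lab ya -> (u \in A) = (u \in C).
Proof.
move=> Xu Yya /andP[lu_gt0 lu_ya].
case: (boolP [exists z, (z \in Y) && (lab z < lab u)]) => [/existsP[z /andP[Yz lzu]]|noY].
  by rewrite (cut_memC_below Xu Yz lzu).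
have [z0 lz0] := lab_surj (leq_trans (leq_pred (lab u)) (lab_le u)).
have lz0u : lab z0 < lab u by rewrite lz0 prednK.
have Xz0 : z0 \in X.
  by rewrite (cut_memX cutXY); apply: contra noY => Yz0; apply/existsP; exists z0; rewrite Yz0.
have Cz0u : (z0 \in C) = (u \in C).
  by rewrite (cut_memC_above Xz0 Yya) ?(cut_memC_above Xu Yya) // (ltn_trans lz0u).
have z0u : z0 != u by apply: contraTneq lz0u => ->; rewrite ltnn.
by rewrite -(cross_edge lz0u) e_sym (cut_edgeX cutXY Xz0 Xu z0u Cz0u).
Qed.

(* The single components u at j-1 and w at j have different types, but each
   placement of u and w relative to the cut forces these types to agree. *)
Lemma cut_no_break j xb ya : ~~ merges lab A j ->
  xb \in X -> ya \in Y -> lab xb < j <= lab ya -> False.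
Proof.
case: j => [//|j] nmj Xxb Yya /andP[lxb_j lj_ya]; have jk := leq_trans lj_ya (lab_le ya).
have sj : single lab j.
  by apply: (cut_single_between Xxb Yya); apply/andP; split; [|apply: ltnW].
have sj1 : single lab j.+1.
  by apply: (cut_single_between Xxb Yya); apply/andP; split; [apply: leqW|].
have [u lu] := lab_surj (ltnW jk); have [w lw] := lab_surj jk.
move: nmj; rewrite /merges /= sj1 sj (single_ctype A sj1 lw) (single_ctype A sj lu) /=.
case/norP => j_neq0 /eqP; apply; have luw : lab u < lab w by rewrite lu lw.
have lxb_ya : lab xb < lab ya by apply: (@leq_ltn_trans j).
have lxb_u : u \in Y -> lab xb < lab u.
  by move=> Yu; rewrite ltn_neqAle cut_lab_neq // lu.
have lw_ya : w \in X -> lab w < lab ya.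
  by move=> Xw; rewrite ltn_neqAle cut_lab_neq // lw.
have lu_gt0 : 0 < lab u by rewrite lu lt0n.
have X_of z : z \notin Y -> z \in X by rewrite (cut_memX cutXY).
case: (boolP (u \in Y)) => [Yu|/X_of Xu]; case: (boolP (w \in Y)) => [Yw|/X_of Xw].
- rewrite -(cut_memC_above Xxb Yu (lxb_u Yu)).
  by rewrite -(cut_memC_above Xxb Yw (ltn_trans (lxb_u Yu) luw)).
- rewrite -(cut_memC_below Xw Yu luw) (cut_memC_above Xw Yya (lw_ya Xw)).
  by rewrite -(cut_memC_above Xxb Yya lxb_ya) (cut_memC_above Xxb Yu (lxb_u Yu)).
- by rewrite (cut_memC_A Xu Yw) ?lu_gt0 // (cut_memC_above Xu Yw luw).
- have luya := ltn_trans luw (lw_ya Xw).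
  have uw : u != w by apply: contraTneq luw => ->; rewrite ltnn.
  have Cuw : (u \in C) = (w \in C).
    by rewrite (cut_memC_above Xu Yya luya) (cut_memC_above Xw Yya (lw_ya Xw)).
  rewrite -(cross_edge luw) e_sym (cut_edgeX cutXY Xu Xw uw Cuw).
  by rewrite (cut_memC_A Xu Yya) ?lu_gt0.
Qed.

End Cut.

Lemma aut_lower_set (f : {perm T}) j : is_aut e f -> 0 < j <= k -> ~~ merges lab A j ->
  f @^-1: [set x | lab x < j] = [set x | lab x < j].
Proof.
move=> autf jk nmj; set L := [set x | lab x < j].
have cutf := cut_preimset (lower_cut jk) autf.
have sub_or : (f @^-1: L \subset L) || (L \subset f @^-1: L).
  case: (boolP (f @^-1: L \subset L)) => //= /subsetPn[ya Lfya Lya].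
  apply/subsetP => xb Lxb; apply/negPn/negP => Lfxb.
  apply: (cut_no_break cutf nmj (xb := xb) (ya := ya)) => //.
    by rewrite (cut_memX cutf).
  by move: Lxb Lya; rewrite !inE -leqNgt => -> ->.
have cardL : #|f @^-1: L| = #|L| by apply: card_preimset; apply: perm_inj.
apply/eqP; case/orP: sub_or => sub; first by rewrite eqEcard sub cardL leqnn.
by rewrite eq_sym eqEcard sub cardL leqnn.
Qed.

Lemma aut_cidx (f : {perm T}) x : is_aut e f ->
  cidx lab A (lab (f x)) = cidx lab A (lab x).
Proof.
move=> autf; apply/eqP/negPn/negP => neq.
have lower_inv j : 0 < j <= k -> ~~ merges lab A j -> (lab (f x) < j) = (lab x < j).
  by move=> jk nmj; have /setP/(_ x) := aut_lower_set autf jk nmj; rewrite !inE.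
have break a b : a <= b -> cidx lab A a != cidx lab A b -> b <= k ->
    exists2 j, a < j <= b & (lab (f x) < j) = (lab x < j).
  move=> le_ab neq_ab bk; have [j /andP[aj jb] nmj] := cidx_neq_break le_ab neq_ab.
  exists j; first by rewrite aj.
  by apply: lower_inv nmj; rewrite (leq_ltn_trans _ aj) // (leq_trans jb).
case: (leqP (lab x) (lab (f x))) => [le_xfx|lt_fxx].
- have neq' : cidx lab A (lab x) != cidx lab A (lab (f x)) by rewrite eq_sym.
  have [j /andP[lxj ljfx]] := break _ _ le_xfx neq' (lab_le _).
  by rewrite lxj ltnNge ljfx.
- have [j /andP[lfxj ljx]] := break _ _ (ltnW lt_fxx) neq (lab_le _).
  by rewrite lfxj ltnNge ljx.
Qed.

Lemma ccomp_aut_memA i (F : {perm T}) x :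
  {in ccomp lab A i, forall z, F z \in ccomp lab A i} ->
  {in ccomp lab A i &, forall a b, e (F a) (F b) = e a b} ->
  x \in ccomp lab A i -> 0 < lab x -> 0 < lab (F x) -> (F x \in A) = (x \in A).
Proof.
move=> FV FE Vx lx_gt0 lFx_gt0; have VFx := FV x Vx.
have eq_c : cidx lab A (lab x) = cidx lab A (lab (F x)).
  by move: Vx VFx; rewrite !inE => /eqP-> /eqP->.
have run_type y z : cidx lab A (lab y) = cidx lab A (lab z) -> 0 < lab y -> lab y < lab z ->
    (y \in A) = (z \in A).
  move=> eq_yz ly_gt0 lyz; have /andP[sy sz] := merged_run_single eq_yz lyz.
  rewrite -(single_ctype A sy erefl) -(single_ctype A sz erefl).
  exact: merged_run_ctype eq_yz ly_gt0 (ltnW lyz).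
case: (ltngtP (lab x) (lab (F x))) => [lt|lt|eq_l].
- by rewrite (run_type _ _ eq_c).
- by rewrite (run_type _ _ (esym eq_c)).
case: (boolP (single lab (lab x))) => [/cards1P[z cz]|nsx].
  have : x \in Defs.comp lab (lab x) by rewrite inE.
  have : F x \in Defs.comp lab (lab x) by rewrite inE eq_l.
  by rewrite cz => /set1P-> /set1P->.
have Vcomp : ccomp lab A i = Defs.comp lab (lab x).
  by rewrite -(ccomp_nonsingle A nsx); move: Vx; rewrite inE => /eqP->.
rewrite Vcomp in FV FE.
have := ks_clique_aut_stable e_sym (comp_indecomposable (lab_le x))
  (comp_ks_clique lx_gt0) FV FE x.
by rewrite !inE -eq_l eqxx.
Qed.

Lemma ccomp_is_aut i (F : {perm T}) :
  {in ccomp lab A i, forall z, F z \in ccomp lab A i} ->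
  {in [predC ccomp lab A i], forall x, F x = x} ->
  {in ccomp lab A i &, forall a b, e (F a) (F b) = e a b} -> is_aut e F.
Proof.
move=> FV Fout FE.
have cross x y : x \in ccomp lab A i -> y \notin ccomp lab A i -> e (F x) y = e x y.
  move=> Vx Vy; have VFx := FV x Vx.
  have eq_c : cidx lab A (lab x) = cidx lab A (lab (F x)).
    by move: Vx VFx; rewrite !inE => /eqP-> /eqP->.
  have neq_c : cidx lab A (lab y) != cidx lab A (lab x).
    by move: Vx Vy; rewrite !inE => /eqP->.
  have lt_eq := cidx_ltn_eq eq_c neq_c.
  case: (ltngtP (lab y) (lab x)) => [lyx|lxy|lxy].
  - have lyFx : lab y < lab (F x) by rewrite -lt_eq.
    rewrite !cross_edge //; apply: (ccomp_aut_memA FV FE Vx).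
      exact: leq_ltn_trans (leq0n _) lyx.
    exact: leq_ltn_trans (leq0n _) lyFx.
  - have lFxy : lab (F x) < lab y.
      rewrite ltn_neqAle leqNgt -lt_eq -leqNgt (ltnW lxy) andbT.
      by apply: contra neq_c => /eqP<-; rewrite eq_c.
    by rewrite e_sym (e_sym x) !cross_edge.
  - by rewrite lxy eqxx in neq_c.
apply/forallP => x; apply/forallP => y; apply/eqP.
case: (boolP (x \in ccomp lab A i)) => Vx; case: (boolP (y \in ccomp lab A i)) => Vy.
- exact: FE.
- by rewrite (Fout y Vy) cross.
- by rewrite (Fout x Vx) e_sym (e_sym x) cross.
- by rewrite (Fout x Vx) (Fout y Vy).
Qed.

Lemma fixing_set_trace S i : fixing_set e S ->
  fixing_set (induced e (ccomp lab A i)) (trace (ccomp lab A i) S).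
Proof.
move=> /forallP fixS; apply/forallP => g; apply/implyP => /andP[autg /forall_inP gS].
set V := ccomp lab A i in g autg gS *.
have [F [FgE Fout]] := exists_ext_perm g.
have FvalE z (Vz : z \in V) : F z = val (g (Sub z Vz)) by rewrite -FgE SubK.
have FV : {in V, forall z, F z \in V} by move=> z Vz; rewrite (FvalE z Vz) (valP (g _)).
have FE : {in V &, forall a b, e (F a) (F b) = e a b}.
  move=> a b Va Vb; rewrite (FvalE a Va) (FvalE b Vb).
  by have := autE (Sub a Va) (Sub b Vb) autg; rewrite /induced !SubK.
have FS : [forall x in S, F x == x].
  apply/forall_inP => x Sx; case: (boolP (x \in V)) => Vx; last by rewrite Fout.
  have /eqP gx : g (Sub x Vx) == Sub x Vx by apply: gS; rewrite inE SubK.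
  by rewrite (FvalE x Vx) gx SubK.
have := fixS F; rewrite (ccomp_is_aut FV Fout FE) FS => /eqP F1.
by apply/eqP/permP => z; apply: val_inj; rewrite perm1 -FgE F1 perm1.
Qed.

Lemma fixing_set_from_traces S :
  (forall i, i <= cidx lab A k ->
     fixing_set (induced e (ccomp lab A i)) (trace (ccomp lab A i) S)) ->
  fixing_set e S.
Proof.
move=> fixV; apply/forallP => f; apply/implyP => /andP[autf /forall_inP fS].
apply/eqP/permP => x; rewrite perm1; set V := ccomp lab A (cidx lab A (lab x)).
have fV : {in V, forall y, f y \in V} by move=> y; rewrite !inE aut_cidx.
have [g gE] := exists_restr_perm fV.
have autg : is_aut (induced e V) g.
  by apply/forallP => a; apply/forallP => b; rewrite /induced !gE autE.
have gS : [forall z in trace V S, g z == z].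
  by apply/forall_inP => z; rewrite inE => Sz; apply/eqP/val_inj; rewrite gE; apply/eqP/fS.
have := fixV _ (leq_cidx lab A (lab_le x)) => /forallP/(_ g); rewrite autg gS => /eqP g1.
have Vx : x \in V by rewrite inE.
by have := gE (Sub x Vx); rewrite g1 perm1 SubK.
Qed.

Lemma fixing_set_ccompP S : fixing_set e S <->
  (forall i, i <= cidx lab A k ->
     fixing_set (induced e (ccomp lab A i)) (trace (ccomp lab A i) S)).
Proof.
by split=> [fixS i _|]; [apply: fixing_set_trace | apply: fixing_set_from_traces].
Qed.

End CanonicalDecomposition.

Theorem mainTheorem7 (T : finType) (e : rel T)
  (e_sym : symmetric e) (e_irr : irreflexive e)
  (k : nat) (lab : T -> nat) (A : {set T}) :
  canonical_decomposition e k lab A ->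
  let l := cidx lab A k in
  (forall S : {set T},
     fixing_set e S <->
     (forall i, i <= l ->
        fixing_set (induced e (ccomp lab A i)) (trace (ccomp lab A i) S))) /\
  Fix e = \sum_(i < l.+1) Fix (induced e (ccomp lab A i)).
Proof.
move=> cd l; have fixP := fixing_set_ccompP e_sym e_irr cd.
split; first exact: fixP.
apply: (Fix_sum_fibers (c := fun x => cidx lab A (lab x))) => [x|]; last exact: fixP.
by rewrite ltnS leq_cidx //; case: cd.
Qed.
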